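(* For every symmetric monoidal restriction category $\mathbf C$, setting $\overline{[f,E]}=[\rho_A^{-1}\circ\overline f,\,I]$ for $[f,E]\colon A\to B$ gives a well-defined restriction structure on $\mathrm{Aux}(\mathbf C)$.
   Context: A restriction category is a category equipped with an assignment to each morphism $f\colon A\to B$ of an endomorphism $\overline{f}\colon A\to A$ such that (i) $f\circ\overline f=f$; (ii) $\overline f\circ\overline g=\overline g\circ\overline f$ whenever $f,g$ have a common domain; (iii) $\overline{g\circ\overline f}=\overline g\circ\overline f$ whenever $f,g$ have a common domain; (iv) $\overline g\circ f=f\circ\overline{g\circ f}$ whenever $g\circ f$ is defined. A morphism $f$ is total if $\overline f=\mathrm{id}$. A (symmetric) monoidal restriction category is a restriction category with a (symmetric) monoidal structure such that $\overline{f\otimes g}=\overline f\otimes\overline g$. Let $\mathbf C$ be a symmetric monoidal restriction category with tensor unit $I$, associator $\alpha$, left unitor $\lambda$, right unitor $\rho$. For morphisms $f\colon A\to B\otimes E$ and $f'\colon A\to B\otimes E'$ write $f\triangleright f'$ if $\overline f=\overline{f'}$ and there is a morphism $h\colon E\to E'$ with $(\mathrm{id}_B\otimes h)\circ f=f'$. Let $\sim$ be the equivalence relation generated by $\triangleright$ (on morphisms of the form $A\to B\otimes X$ for fixed $A,B$ and varying $X$). The category $\mathrm{Aux}(\mathbf C)$ has the objects of $\mathbf C$; a morphism $A\to B$ is a $\sim$-class $[f,E]$ of a morphism $f\colon A\to B\otimes E$ of $\mathbf C$; the composite of $[f,E]\colon A\to B$ and $[g,E']\colon B\to C$ is $[\alpha\circ(g\otimes\mathrm{id}_E)\circ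 f,\;E'\otimes E]$; the identity on $A$ is $[\rho_A^{-1},I]$. *)

From Stdlib Require Import Relations.

Set Implicit Arguments.

Record SMRCat := {
  ob :> Type;
  hom : ob -> ob -> Type;
  comp : forall A B C : ob, hom B C -> hom A B -> hom A C;
  idm : forall A : ob, hom A A;
  comp_assoc : forall A B C D (f : hom A B) (g : hom B C) (h : hom C D),
      comp h (comp g f) = comp (comp h g) f;
  comp_id_l : forall A B (f : hom A B), comp (idm B) f = f;
  comp_id_r : forall A B (f : hom A B), comp f (idm A) = f;
  rst : forall A B : ob, hom A B -> hom A A;
  rst_R1 : forall A B (f : hom A B), comp f (rst f) = f;
  rst_R2 : forall A B B' (f : hom A B) (g : hom A B'),
      comp (rst f) (rst g) = comp (rst g) (rst f);
  rst_R3 : forall A B B' (f : hom A B) (g : hom A B'),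
      rst (comp g (rst f)) = comp (rst g) (rst f);
  rst_R4 : forall A B C (f : hom A B) (g : hom B C),
      comp (rst g) f = comp f (rst (comp g f));
  tens : ob -> ob -> ob;
  tensm : forall A B C D : ob, hom A B -> hom C D -> hom (tens A C) (tens B D);
  tensm_id : forall A B, tensm (idm A) (idm B) = idm (tens A B);
  tensm_comp : forall A B C A' B' C' (f : hom A B) (g : hom B C)
      (f' : hom A' B') (g' : hom B' C'),
      tensm (comp g f) (comp g' f') = comp (tensm g g') (tensm f f');
  unit : ob;
  alpha : forall A B C, hom (tens (tens A B) C) (tens A (tens B C));
  alpha_inv : forall A B C, hom (tens A (tens B C)) (tens (tens A B) C);
  alpha_iso1 : forall A B C, comp (alpha_inv A B C) (alpha A B C) = idm _;
  alpha_iso2 : forall A B C, comp (alpha A B C) (alpha_inv A B C) = idm _;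
  alpha_nat : forall A B C A' B' C' (f : hom A A') (g : hom B B') (h : hom C C'),
      comp (alpha A' B' C') (tensm (tensm f g) h)
      = comp (tensm f (tensm g h)) (alpha A B C);
  lam : forall A, hom (tens unit A) A;
  lam_inv : forall A, hom A (tens unit A);
  lam_iso1 : forall A, comp (lam_inv A) (lam A) = idm _;
  lam_iso2 : forall A, comp (lam A) (lam_inv A) = idm _;
  lam_nat : forall A A' (f : hom A A'),
      comp (lam A') (tensm (idm unit) f) = comp f (lam A);
  rho : forall A, hom (tens A unit) A;
  rho_inv : forall A, hom A (tens A unit);
  rho_iso1 : forall A, comp (rho_inv A) (rho A) = idm _;
  rho_iso2 : forall A, comp (rho A) (rho_inv A) = idm _;
  rho_nat : forall A A' (f : hom A A'),
      comp (rho A') (tensm f (idm unit)) = comp f (rho A);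
  pentagon : forall A B C D,
      comp (tensm (idm A) (alpha B C D))
           (comp (alpha A (tens B C) D) (tensm (alpha A B C) (idm D)))
      = comp (alpha A B (tens C D)) (alpha (tens A B) C D);
  triangle : forall A B,
      comp (tensm (idm A) (lam B)) (alpha A unit B) = tensm (rho A) (idm B);
  sigma : forall A B, hom (tens A B) (tens B A);
  sigma_invol : forall A B, comp (sigma B A) (sigma A B) = idm _;
  sigma_nat : forall A B A' B' (f : hom A A') (g : hom B B'),
      comp (sigma A' B') (tensm f g) = comp (tensm g f) (sigma A B);
  hexagon : forall A B C,
      comp (alpha B C A) (comp (sigma A (tens B C)) (alpha A B C))
      = comp (tensm (idm B) (sigma A C))
             (comp (alpha B A C) (tensm (sigma A B) (idm C)));
  rst_tensm : forall A B C D (f : hom A B) (g : hom C D),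
      rst (tensm f g) = tensm (rst f) (rst g)
}.

Arguments hom {s} _ _.
Arguments comp {s A B C} g f.
Arguments idm {s} A.
Arguments rst {s A B} f.
Arguments tens {s} _ _.
Arguments tensm {s A B C D} f g.
Arguments unit {s}.
Arguments alpha {s} A B C.
Arguments rho_inv {s} A.

Section Aux.
Variable C : SMRCat.

(** Representatives of morphisms A -> B of Aux(C): pairs (E, f : A -> B (x) E). *)
Definition auxrep (A B : C) : Type := { E : C & hom A (tens B E) }.

Definition aux_tri (A B : C) (p q : auxrep A B) : Prop :=
  rst (projT2 p) = rst (projT2 q) /\
  exists h : hom (projT1 p) (projT1 q),
    comp (tensm (idm B) h) (projT2 p) = projT2 q.

Definition aux_eq (A B : C) : relation (auxrep A B) :=
  clos_refl_sym_trans _ (@aux_tri A B).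

Definition aux_comp (A B D : C) (g : auxrep B D) (f : auxrep A B) : auxrep A D :=
  existT _ (tens (projT1 g) (projT1 f))
    (comp (alpha D (projT1 g) (projT1 f))
          (comp (tensm (projT2 g) (idm (projT1 f))) (projT2 f))).

Definition aux_id (A : C) : auxrep A A := existT _ unit (rho_inv A).

Definition aux_rst (A B : C) (f : auxrep A B) : auxrep A A :=
  existT _ unit (comp (rho_inv A) (rst (projT2 f))).

End Aux.

Arguments aux_eq {C A B} _ _.
Arguments aux_comp {C A B D} g f.
Arguments aux_rst {C A B} f.

(** Well-definedness is immediate, since f |> f' already forces bar f = bar f'.
    For the axioms, the key observation is that a representative (E, f) is
    ~-equivalent to any "reindexing" (E', (id_B (x) h) o f) along a split mono
    h : E -> E', because id_B (x) h is then total and leaves bar f unchanged.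
    Using Kelly's coherence lemma  (id (x) rho) o alpha = rho  and the triangle
    identity, composing with a restriction in Aux(C) is computed explicitly:
    g o bar f  is the reindexing of  g o bar f  (computed in C) along rho^{-1}.
    Each restriction axiom in Aux(C) then reduces to the corresponding axiom
    in C, up to reindexing along rho^{-1} or lambda^{-1}. *)
From Stdlib Require Import Relations.

Section AuxRestriction.
Variable C : SMRCat.
Implicit Types A B D E : C.

Lemma split_mono_cancel {A B W} (a : hom A B) (a' : hom B A) {u v : hom W A}
    (Hinv : comp a' a = idm A) (Huv : comp a u = comp a v) : u = v.
Proof.
  rewrite <- (comp_id_l _ _ _ u), <- (comp_id_l _ _ _ v), <- Hinv.
  rewrite <- !comp_assoc, Huv. reflexivity.
Qed.

Lemma rst_id A : rst (idm A) = idm A.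
Proof.
  pose proof (rst_R1 C _ _ (idm A)) as H. rewrite comp_id_l in H. exact H.
Qed.

Lemma rst_split_mono {A B} {t : hom A B} {t' : hom B A}
    (Hinv : comp t' t = idm A) : rst t = idm A.
Proof.
  rewrite <- (comp_id_l _ _ _ (rst t)), <- Hinv, <- comp_assoc, rst_R1.
  reflexivity.
Qed.

Lemma rst_comp_le A B D (f : hom A B) (g : hom B D) :
  rst (comp g f) = comp (rst f) (rst (comp g f)).
Proof.
  transitivity (rst (comp g (comp f (rst f)))); [rewrite rst_R1; reflexivity |].
  rewrite comp_assoc, rst_R3. apply rst_R2.
Qed.

Lemma rst_comp_rst A B D (f : hom A B) (g : hom B D) :
  rst (comp (rst g) f) = rst (comp g f).
Proof. rewrite rst_R4, rst_R3. symmetry. apply rst_comp_le. Qed.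

Lemma rst_comp_total {A B D} {t : hom B D} (k : hom A B)
    (Ht : rst t = idm B) : rst (comp t k) = rst k.
Proof. rewrite <- rst_comp_rst, Ht, comp_id_l. reflexivity. Qed.

Lemma rst_comp_split_mono {A B W} {t : hom A B} {t' : hom B A} (k : hom W A)
    (Hinv : comp t' t = idm A) : rst (comp t k) = rst k.
Proof. apply rst_comp_total. exact (rst_split_mono Hinv). Qed.

Lemma tensm_comp_idl A X Y Z (g : hom Y Z) (f : hom X Y) :
  tensm (idm A) (comp g f) = comp (tensm (idm A) g) (tensm (idm A) f).
Proof. rewrite <- tensm_comp, comp_id_l. reflexivity. Qed.

Lemma tensm_comp_idr A X Y Z (g : hom Y Z) (f : hom X Y) :
  tensm (comp g f) (idm A) = comp (tensm g (idm A)) (tensm f (idm A)).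
Proof. rewrite <- tensm_comp, comp_id_l. reflexivity. Qed.

Lemma tensm_idl_inverse A {X Y} {h : hom X Y} {h' : hom Y X}
    (Hinv : comp h' h = idm X) :
  comp (tensm (idm A) h') (tensm (idm A) h) = idm (tens A X).
Proof. rewrite <- tensm_comp_idl, Hinv, tensm_id. reflexivity. Qed.

Lemma rho_inv_nat A A' (k : hom A A') :
  comp (tensm k (idm unit)) (rho_inv A) = comp (rho_inv A') k.
Proof.
  apply (split_mono_cancel (rho C A') (rho_inv A')); [apply rho_iso1 |].
  rewrite !comp_assoc, rho_nat, rho_iso2, comp_id_l, <- comp_assoc, rho_iso2.
  apply comp_id_r.
Qed.

(** - (x) I is faithful, since rho is a natural isomorphism. *)
Lemma tensm_unit_faithful A B (X Y : hom A B) :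
  tensm X (idm unit) = tensm Y (idm unit) -> X = Y.
Proof.
  intro H.
  assert (Hrecover : forall Z : hom A B,
             Z = comp (comp (rho C B) (tensm Z (idm unit))) (rho_inv A)).
  { intro Z. rewrite rho_nat, <- comp_assoc, rho_iso2, comp_id_r. reflexivity. }
  rewrite (Hrecover X), (Hrecover Y), H. reflexivity.
Qed.

(** As - (x) I
    is faithful and alpha is mono, it suffices to compare both sides after
    tensoring with I and postcomposing with alpha; both then reduce, by the
    pentagon and the triangle identity, to the same composite. *)
Lemma kelly A B :
  comp (tensm (idm A) (rho C B)) (alpha A B unit) = rho C (tens A B).
Proof.
  apply tensm_unit_faithful.
  apply (split_mono_cancel (alpha A B unit) (alpha_inv C A B unit));
    [apply alpha_iso1 |].
  transitivity (comp (tensm (idm A) (tensm (idm B) (lam C unit)))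
     (comp (tensm (idm A) (alpha B unit unit))
        (comp (alpha A (tens B unit) unit) (tensm (alpha A B unit) (idm unit))))).
  - rewrite (comp_assoc _ _ _ _ _ _ (tensm (idm A) (alpha B unit unit))).
    rewrite <- tensm_comp_idl, triangle, comp_assoc, <- alpha_nat, <- comp_assoc.
    rewrite <- tensm_comp_idr. reflexivity.
  - rewrite pentagon, comp_assoc, <- alpha_nat, <- comp_assoc, tensm_id, triangle.
    reflexivity.
Qed.

Lemma kelly_inv A B :
  comp (alpha A B unit) (rho_inv (tens A B)) = tensm (idm A) (rho_inv B).
Proof.
  apply (split_mono_cancel (tensm (idm A) (rho C B)) (tensm (idm A) (rho_inv B)));
    [apply tensm_idl_inverse, rho_iso1 |].
  rewrite comp_assoc, kelly, rho_iso2, <- tensm_comp_idl, rho_iso2, tensm_id.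
  reflexivity.
Qed.

Lemma triangle_inv A B :
  comp (alpha A unit B) (tensm (rho_inv A) (idm B)) = tensm (idm A) (lam_inv C B).
Proof.
  apply (split_mono_cancel (tensm (idm A) (lam C B)) (tensm (idm A) (lam_inv C B)));
    [apply tensm_idl_inverse, lam_iso1 |].
  rewrite comp_assoc, triangle, <- tensm_comp_idr, rho_iso2, tensm_id.
  rewrite <- tensm_comp_idl, lam_iso2, tensm_id. reflexivity.
Qed.

Lemma rst_alpha_comp A B D W (k : hom W (tens (tens A B) D)) :
  rst (comp (alpha A B D) k) = rst k.
Proof. apply (rst_comp_split_mono (t' := alpha_inv C A B D)), alpha_iso1. Qed.

Lemma aux_eq_reindex {A B E E'} (h : hom E E') (h' : hom E' E)
    {f : hom A (tens B E)} {g : hom A (tens B E')}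
    (Hinv : comp h' h = idm E) (Hg : comp (tensm (idm B) h) f = g) :
  aux_eq (existT (fun X => hom A (tens B X)) E f) (existT _ E' g).
Proof.
  apply rst_step. split.
  - rewrite <- Hg. symmetry. exact (rst_comp_split_mono f (tensm_idl_inverse B Hinv)).
  - exists h. exact Hg.
Qed.

Lemma aux_comp_rst A B D (g : auxrep C A D) (f : auxrep C A B) :
  aux_comp g (aux_rst f)
  = existT _ (tens (projT1 g) unit)
      (comp (tensm (idm D) (rho_inv (projT1 g))) (comp (projT2 g) (rst (projT2 f)))).
Proof.
  destruct g as [E g]. unfold aux_comp, aux_rst; simpl. f_equal.
  rewrite (comp_assoc _ _ _ _ _ _ (rho_inv A)), rho_inv_nat.
  rewrite !comp_assoc, kelly_inv. reflexivity.
Qed.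

Lemma aux_rst_compat A B (f f' : auxrep C A B) :
  aux_eq f f' -> aux_eq (aux_rst f) (aux_rst f').
Proof.
  induction 1 as [f f' [Hrst _] | f | f f' _ IH | f f' f'' _ IH1 _ IH2].
  - unfold aux_rst. rewrite Hrst. apply rst_refl.
  - apply rst_refl.
  - apply rst_sym. exact IH.
  - exact (rst_trans _ _ _ _ _ IH1 IH2).
Qed.

Lemma aux_R1 A B (f : auxrep C A B) : aux_eq (aux_comp f (aux_rst f)) f.
Proof.
  rewrite aux_comp_rst, rst_R1. destruct f as [E f]; simpl.
  apply rst_sym, (aux_eq_reindex (rho_inv E) (rho C E)); [apply rho_iso2 | reflexivity].
Qed.

Lemma aux_R2 A B B' (f : auxrep C A B) (g : auxrep C A B') :
  aux_eq (aux_comp (aux_rst f) (aux_rst g)) (aux_comp (aux_rst g) (aux_rst f)).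
Proof.
  rewrite !aux_comp_rst; simpl. rewrite <- !comp_assoc, rst_R2. apply rst_refl.
Qed.

(** Axiom (R3) in Aux(C): both sides represent  bar g o bar f  of C, the
    right-hand side reindexed along rho_I^{-1}. *)
Lemma aux_R3 A B B' (f : auxrep C A B) (g : auxrep C A B') :
  aux_eq (aux_rst (aux_comp g (aux_rst f))) (aux_comp (aux_rst g) (aux_rst f)).
Proof.
  rewrite !aux_comp_rst; destruct g as [E g]; simpl. unfold aux_rst; simpl.
  rewrite (rst_comp_split_mono _ (tensm_idl_inverse B' (rho_iso2 C E))), rst_R3.
  apply (aux_eq_reindex (rho_inv unit) (rho C unit)); [apply rho_iso2 |].
  rewrite <- !comp_assoc. reflexivity.
Qed.

(** Axiom (R4) in Aux(C): both sides are reindexings, along lambda^{-1} and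
    rho^{-1} respectively, of  f o bar((g (x) id_E) o f). *)
Lemma aux_R4 A B D (f : auxrep C A B) (g : auxrep C B D) :
  aux_eq (aux_comp (aux_rst g) f) (aux_comp f (aux_rst (aux_comp g f))).
Proof.
  rewrite aux_comp_rst. destruct f as [E f], g as [E' g].
  unfold aux_comp, aux_rst; simpl. rewrite rst_alpha_comp.
  set (r := rst (comp (tensm g (idm E)) f)).
  apply rst_trans with (y := existT (fun X => hom A (tens B X)) E (comp f r)).
  - apply rst_sym, (aux_eq_reindex (lam_inv C E) (lam C E)); [apply lam_iso2 |].
    assert (Hrst : tensm (rst g) (idm E) = rst (tensm g (idm E))).
    { rewrite rst_tensm, rst_id. reflexivity. }
    rewrite tensm_comp_idr, Hrst, !comp_assoc, triangle_inv, <- !comp_assoc, rst_R4.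
    reflexivity.
  - apply (aux_eq_reindex (rho_inv E) (rho C E)); [apply rho_iso2 | reflexivity].
Qed.

End AuxRestriction.

Theorem proposition3p6 (C : SMRCat) :
  (* well-defined on ~-classes *)
  (forall (A B : C) (f f' : auxrep C A B),
      aux_eq f f' -> aux_eq (aux_rst f) (aux_rst f')) /\
  (* (i) f o bar f = f *)
  (forall (A B : C) (f : auxrep C A B),
      aux_eq (aux_comp f (aux_rst f)) f) /\
  (* (ii) *)
  (forall (A B B' : C) (f : auxrep C A B) (g : auxrep C A B'),
      aux_eq (aux_comp (aux_rst f) (aux_rst g)) (aux_comp (aux_rst g) (aux_rst f))) /\
  (* (iii) *)
  (forall (A B B' : C) (f : auxrep C A B) (g : auxrep C A B'),
      aux_eq (aux_rst (aux_comp g (aux_rst f))) (aux_comp (aux_rst g) (aux_rst f))) /\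
  (* (iv) *)
  (forall (A B D : C) (f : auxrep C A B) (g : auxrep C B D),
      aux_eq (aux_comp (aux_rst g) f) (aux_comp f (aux_rst (aux_comp g f)))).
Proof.
  repeat split.
  - apply aux_rst_compat.
  - apply aux_R1.
  - apply aux_R2.
  - apply aux_R3.
  - apply aux_R4.
Qed.
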